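(* Let $\xi\in\mathbb{R}\setminus\{0\}$ and for $\psi\in H_0^2((-1,1))$ let $E_0(\psi)=\frac12\int_{-1}^1|B|^2\big(|\psi'|^2+\frac{|\psi''|^2}{\xi^2}\big)dx_2-\frac12g[\rho]\psi(0)^2$. Then: (i) if $|B|\ge|B|_c$, then $E_0(\psi)\ge0$ for every $\psi\in H_0^2((-1,1))$, and moreover $E_0(\psi)\ge\frac12\int_{-1}^1\big((|B|^2-|B|_c^2)|\psi'|^2+\frac{|B|^2|\psi''|^2}{\xi^2}\big)dx_2$; (ii) if $|B|<|B|_c$ and $|\xi|\le|\xi|^B_{vc}$, then $E_0(\psi)\ge0$ for every $\psi\in H_0^2((-1,1))$; (iii) if $|B|<|B|_c$ and $|\xi|>|\xi|^B_{vc}$, then there exists $\psi\in H_0^2((-1,1))$ with $E_0(\psi)<0$; (iv) if there is $\psi\in H_0^2((-1,1))$ with $E_0(\psi)<0$, then $|B|<|B|_c$, $|\xi|>|\xi|^B_{vc}$ and $\psi(0)\ne0$.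
   Context: $g>0$, $[\rho]>0$, $B\ne0$ constants. $|B|_c^2:=\sup\{g[\rho]\psi(0)^2/\int_{-1}^1|\psi'|^2dx_2: 0\ne\psi\in H_0^1((-1,1))\}$; for $|B|<|B|_c$, $(|\xi|^B_{vc})^2:=\inf\{|B|^2\int_{-1}^1|\psi''|^2dx_2/(g[\rho]\psi(0)^2-|B|^2\int_{-1}^1|\psi'|^2dx_2):\psi\in H_0^2((-1,1)),\ g[\rho]\psi(0)^2-|B|^2\int_{-1}^1|\psi'|^2dx_2>0\}$. *)

From HB Require Import structures.
From mathcomp Require Import all_boot all_order all_algebra.
From mathcomp Require Import all_classical all_reals all_analysis.
Set Implicit Arguments. Unset Strict Implicit. Unset Printing Implicit Defensive.
Import Order.TTheory GRing.Theory Num.Theory.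
Import numFieldNormedType.Exports.
Local Open Scope classical_set_scope.
Local Open Scope ring_scope.

Section Defs.
Variable R : realType.
Local Notation leb := (@lebesgue_measure R).

Definition I11 : set R := `[-1, 1].

Definition L2 (f : R -> R) : Prop :=
  measurable_fun I11 f /\ leb.-integrable I11 (fun x => (f x ^+ 2)%:E).

(* f(x) = int_{-1}^x df for all x in [-1,1], with df integrable on [-1,1]:
   f is absolutely continuous on [-1,1], f(-1) = 0, and f' = df a.e. *)
Definition primitive (f df : R -> R) : Prop :=
  leb.-integrable I11 (EFin \o df) /\
  forall x, -1 <= x <= 1 -> f x = Rintegral leb `[-1, x] df.

Definition H01 (psi psi1 : R -> R) : Prop :=
  L2 psi1 /\ primitive psi psi1 /\ psi 1 = 0.

Definition H02 (psi psi1 psi2 : R -> R) : Prop :=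
  L2 psi2 /\ primitive psi1 psi2 /\ primitive psi psi1 /\
  psi 1 = 0 /\ psi1 1 = 0.

Definition sqint (f : R -> R) : R := Rintegral leb I11 (fun x => f x ^+ 2).

Definition Bc2 (g rho : R) : R :=
  sup [set r | exists psi psi1, H01 psi psi1 /\
     (exists x, -1 <= x <= 1 /\ psi x != 0) /\
     r = g * rho * psi 0 ^+ 2 / sqint psi1].

Definition Bc (g rho : R) : R := Num.sqrt (Bc2 g rho).

Definition xivc2 (g rho B : R) : R :=
  inf [set r | exists psi psi1 psi2, H02 psi psi1 psi2 /\
     0 < g * rho * psi 0 ^+ 2 - `|B| ^+ 2 * sqint psi1 /\
     r = `|B| ^+ 2 * sqint psi2 / (g * rho * psi 0 ^+ 2 - `|B| ^+ 2 * sqint psi1)].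

Definition xivc (g rho B : R) : R := Num.sqrt (xivc2 g rho B).

Definition E0 (g rho B xi : R) (psi psi1 psi2 : R -> R) : R :=
  2^-1 * Rintegral leb I11
     (fun x => `|B| ^+ 2 * (psi1 x ^+ 2 + psi2 x ^+ 2 / xi ^+ 2))
  - 2^-1 * g * rho * psi 0 ^+ 2.

End Defs.

From HB Require Import structures.
From mathcomp Require Import all_boot all_order all_algebra.
From mathcomp Require Import all_classical all_reals all_analysis.
From mathcomp Require Import measurable_realfun lra ring.
Set Implicit Arguments.
Unset Strict Implicit.
Unset Printing Implicit Defensive.
Import Order.TTheory GRing.Theory Num.Theory.
Import numFieldNormedType.Exports.
Local Open Scope classical_set_scope.
Local Open Scope ring_scope.

(* With D := g[rho] psi(0)^2 - |B|^2 |psi'|^2 one has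
   2 E_0(psi) = |B|^2 |psi''|^2 / xi^2 - D.  Part (i) follows from
   g[rho] psi(0)^2 <= |B|_c^2 |psi'|^2.  Otherwise E_0(psi) < 0 iff D > 0 and
   |B|^2 |psi''|^2 / D < xi^2, i.e. iff psi is a competitor for (|xi|^B_vc)^2
   with value below xi^2, and D > 0 forces
   |B|^2 < g[rho] psi(0)^2 / |psi'|^2 <= |B|_c^2; this gives (ii) and (iv).
   For (iii) the set of competitors must be nonempty: as
   psi(0) = int_{-1}^0 psi' = - int_0^1 psi', Cauchy-Schwarz on both halves
   gives 2 psi(0)^2 <= |psi'|^2, so |B|_c^2 <= g[rho]/2, and smoothings of the
   tent 1 - |x| make D > 0 whenever |B|^2 < g[rho]/2. *)

Section RintegralFacts.
Context {d} {T : measurableType d} {R : realType}.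
Variables (mu : {measure set T -> \bar R}) (D : set T).
Hypothesis mD : measurable D.

Lemma integrable_cst_fin (k : R) : (mu D < +oo)%E ->
  mu.-integrable D (EFin \o cst k).
Proof.
move=> Dfin; apply/integrableP; split; first exact/measurable_EFinP.
rewrite (eq_integral (cst `|k|%:E)) ?integral_cst //.
by rewrite lte_mul_pinfty.
Qed.

Lemma integrableZl_EFin (k : R) (f : T -> R) :
  mu.-integrable D (EFin \o f) -> mu.-integrable D (EFin \o (fun x => k * f x)).
Proof.
by move=> If; apply: eq_integrable (integrableZl mD k If).
Qed.

Lemma integrableD_EFin (f h : T -> R) :
  mu.-integrable D (EFin \o f) -> mu.-integrable D (EFin \o h) ->
  mu.-integrable D (EFin \o (fun x => f x + h x)).
Proof.
by move=> If Ih; apply: eq_integrable (integrableD mD If Ih).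
Qed.

Lemma Rintegral_lincomb (a b : R) (f h : T -> R) :
  mu.-integrable D (EFin \o f) -> mu.-integrable D (EFin \o h) ->
  \int[mu]_(x in D) (a * f x + b * h x) =
  a * \int[mu]_(x in D) f x + b * \int[mu]_(x in D) h x.
Proof.
move=> If Ih.
by rewrite RintegralD ?RintegralZl //; exact: integrableZl_EFin.
Qed.

Lemma sqr_Rintegral_le (f : T -> R) : mu D = 1%:E ->
  mu.-integrable D (EFin \o f) -> mu.-integrable D (EFin \o (fun x => f x ^+ 2)) ->
  (\int[mu]_(x in D) f x) ^+ 2 <= \int[mu]_(x in D) f x ^+ 2.
Proof.
move=> D1 If If2; set a := \int[mu]_(x in D) f x.
have Ic k : mu.-integrable D (EFin \o cst k).
  by apply: integrable_cst_fin; rewrite D1 ltry.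
(* integrate a f <= (a^2 + f^2) / 2, where a is the mean of f *)
have : \int[mu]_(x in D) (a * f x) <=
       \int[mu]_(x in D) (2^-1 * a ^+ 2 + 2^-1 * f x ^+ 2).
  apply: le_Rintegral => //; first exact: integrableZl_EFin.
    apply: integrableD_EFin; apply: integrableZl_EFin; first exact: Ic.
    exact: If2.
  by move=> x _; have := sqr_ge0 (a - f x); lra.
rewrite RintegralZl // Rintegral_lincomb //; last exact: Ic.
by rewrite Rintegral_cst // D1 /= -/a; lra.
Qed.

End RintegralFacts.

Lemma sqrtr_le_norm (R : rcfType) (a x : R) :
  (Num.sqrt a <= `|x|) = (a <= `|x| ^+ 2).
Proof.
have nE : `|x| = Num.sqrt (`|x| ^+ 2) by rewrite sqrtr_sqr normr_id.
by rewrite {1}nE ler_sqrt ?sqr_ge0.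
Qed.

Lemma norm_le_sqrtr (R : rcfType) (a x : R) : 0 <= a ->
  (`|x| <= Num.sqrt a) = (`|x| ^+ 2 <= a).
Proof.
have nE : `|x| = Num.sqrt (`|x| ^+ 2) by rewrite sqrtr_sqr normr_id.
by move=> a0; rewrite {1}nE ler_sqrt.
Qed.

Section Sobolev.
Context {R : realType}.
Notation mu := (@lebesgue_measure R).
Notation mR := (measurableTypeR R).

Lemma sqint_ge0 (f : R -> R) : 0 <= sqint f.
Proof. by apply: Rintegral_ge0 => x _; exact: sqr_ge0. Qed.

Lemma continuous_L2 (f : R -> R) : {within `[-1, 1], continuous f} -> L2 f.
Proof.
move=> cf; split.
  apply: subspace_continuous_measurable_fun => //.
  exact: measurable_itv.
apply: continuous_compact_integrable; first exact: segment_compact.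
by move=> x; exact: (continuous_comp (cf x) (@exprn_continuous R 2 (f x))).
Qed.

Lemma primitive_L2 (f df : R -> R) : primitive f df -> L2 f.
Proof.
move=> [Idf Pf]; set G := parameterized_integral mu (-1) ^~ df.
have [mG IG] : L2 G.
  by apply: continuous_L2; apply: parameterized_integral_continuous => //; lra.
have GE : {in `[-1, 1], G =1 f}.
  by move=> x; rewrite in_itv /= => /andP[? ?]; rewrite Pf //; lra.
split.
  by apply: eq_measurable_fun mG => x xI; apply: GE; move: xI; rewrite !inE.
apply: eq_integrable IG; first exact: measurable_itv.
by move=> x xI /=; rewrite GE //; move: xI; rewrite !inE.
Qed.

Lemma H02_H01 (psi psi1 psi2 : R -> R) : H02 psi psi1 psi2 -> H01 psi psi1.
Proof. by move=> [_ [P1 [P [p1 _]]]]; split; first exact: primitive_L2 P1. Qed.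

Lemma H01_sqr0_le (psi psi1 : R -> R) : H01 psi psi1 ->
  2 * psi 0 ^+ 2 <= sqint psi1.
Proof.
move=> [[_ I2] [[I1 Pp] p1]].
have I1' : mu.-integrable (`[-1, 1] : set mR) (EFin \o psi1) by [].
have I2' : mu.-integrable (`[-1, 1] : set mR) (EFin \o (fun x => psi1 x ^+ 2)).
  by [].
have psi0E : psi 0 = Rintegral mu `[-1, 0] psi1 by apply: Pp; lra.
have psi0E' : - psi 0 = Rintegral mu `]0, 1] psi1.
  rewrite -(Rintegral_itvB (x := 0) I1') ?bnd_simp ?lerN10 ?ler01 //.
  by rewrite -Pp ?p1 -?psi0E ?sub0r //; lra.
have splitE : sqint psi1 = Rintegral mu `[-1, 0] (fun x => psi1 x ^+ 2)
                         + Rintegral mu `]0, 1] (fun x => psi1 x ^+ 2).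
  rewrite -(Rintegral_itvB (x := 0) I2') ?bnd_simp ?lerN10 ?ler01 //.
  by rewrite /sqint /I11; ring.
have CS (a b : itv_bound R) : [set` Interval a b] `<=` `[-1, 1] ->
    mu [set` Interval a b] = 1%:E ->
    (Rintegral mu [set` Interval a b] psi1) ^+ 2
    <= Rintegral mu [set` Interval a b] (fun x => psi1 x ^+ 2).
  move=> sub ab1.
  have mab : measurable ([set` Interval a b] : set mR) := measurable_itv _.
  apply: (sqr_Rintegral_le mab ab1).
    by apply: integrableS I1'.
  by apply: integrableS I2'.
have left_half : psi 0 ^+ 2 <= Rintegral mu `[-1, 0] (fun x => psi1 x ^+ 2).
  rewrite psi0E; apply: CS.
    by apply: subset_itvl; rewrite bnd_simp ?ler01 ?lerN10 ?ltrN10.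
  by rewrite lebesgue_measure_itv /= lte_fin ltrN10 opprK add0r.
have right_half : psi 0 ^+ 2 <= Rintegral mu `]0, 1] (fun x => psi1 x ^+ 2).
  rewrite -sqrrN psi0E'; apply: CS.
    by apply: subset_itvr; rewrite bnd_simp ?ler01 ?lerN10 ?ltrN10.
  by rewrite lebesgue_measure_itv /= lte01 oppr0 adde0.
by rewrite splitE mulr_natl mulr2n; exact: lerD.
Qed.

Lemma sqint_lincomb (a b : R) (psi psi1 psi2 : R -> R) : H02 psi psi1 psi2 ->
  Rintegral mu (@I11 R) (fun x => a * psi1 x ^+ 2 + b * psi2 x ^+ 2) =
  a * sqint psi1 + b * sqint psi2.
Proof.
move=> H; have [[_ I1] _] := H02_H01 H; case: H => [[_ I2] _].
by rewrite Rintegral_lincomb //; exact: measurable_itv.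
Qed.

Lemma E0E (g rho B xi : R) (psi psi1 psi2 : R -> R) : H02 psi psi1 psi2 ->
  E0 g rho B xi psi psi1 psi2 =
  2^-1 * (`|B| ^+ 2 / xi ^+ 2 * sqint psi2
          - (g * rho * psi 0 ^+ 2 - `|B| ^+ 2 * sqint psi1)).
Proof.
move=> H; transitivity (2^-1 * (`|B| ^+ 2 * sqint psi1
    + `|B| ^+ 2 / xi ^+ 2 * sqint psi2) - 2^-1 * g * rho * psi 0 ^+ 2).
  rewrite -(sqint_lincomb _ _ H); congr (_ * _ - _).
  by apply: eq_Rintegral => x _; ring.
by ring.
Qed.

End Sobolev.

Section FTC.
Context {R : realType}.

Lemma derivable1_continuous (f : R -> R) : (forall x : R, derivable f x 1) ->
  continuous f.
Proof. by move=> df x; apply: differentiable_continuous; exact/derivable1_diffP. Qed.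

Lemma primitive_of_derive (F f : R -> R) : (forall x : R, is_derive x 1 F (f x)) ->
  (forall x : R, derivable f x 1) -> F (-1) = 0 -> primitive F f.
Proof.
move=> dF df F0.
have cf := derivable1_continuous df.
have cF : continuous F by apply: derivable1_continuous => x; case: (dF x).
split.
  apply: continuous_compact_integrable; first exact: segment_compact.
  exact: continuous_subspaceT.
move=> x /andP[x1 x2].
have [<-|x1'] := eqVneq (-1) x; first by rewrite set_itv1 Rintegral_set1.
have lt : -1 < x by rewrite lt_neqAle x1' x1.
have := @continuous_FTC2 R f F (-1) x lt (continuous_subspaceT cf).
rewrite /Rintegral => ->.
- by rewrite F0 sube0.
- split.
  + by move=> y _; case: (dF y).
  + exact: cvg_at_right_filter (cF _).
  + exact: cvg_at_left_filter (cF _).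
- by move=> y _; rewrite derive1E; exact: derive_val.
Qed.

End FTC.

Section TentApprox.
Context {R : realType}.
Notation mu := (@lebesgue_measure R).
Notation mR := (measurableTypeR R).
Variables (e : R) (n : nat).
Hypothesis e_gt0 : 0 < e.

(* tent smooths 1 - |x| through sabs x = sqrt (x^2 + e^2); the correction
   tent_coef x^(2n+2) / (2n+2) makes tent' vanish at 1 and -1 while moving
   tent(0) by at most 1/(2n+2). *)
Definition sabs_sq : R -> R := (@id R) ^+ 2 + cst (e ^+ 2).
Definition sabs : R -> R := Num.sqrt \o sabs_sq.
Definition sabsV : R -> R := fun y => (sabs y)^-1.
Definition tent_coef : R := sabsV 1.
Definition tent_deg : R := (n.*2.+2)%:R.
Definition tent : R -> R := cst (sabs 1 - tent_coef / tent_deg) - sabs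
  + cst (tent_coef / tent_deg) * (@id R) ^+ (n.*2.+2).
Definition tent1 : R -> R :=
  - ((@id R) * sabsV) + cst tent_coef * (@id R) ^+ (n.*2.+1).
Definition tent2 : R -> R := - (cst (e ^+ 2) * sabsV ^+ 3)
  + cst ((n.*2.+1)%:R * tent_coef) * (@id R) ^+ (n.*2).

Lemma sabs_sqE x : sabs_sq x = x ^+ 2 + e ^+ 2.
Proof. by rewrite /sabs_sq !fctE. Qed.

Lemma sabs_sq_gt0 x : 0 < sabs_sq x.
Proof.
by rewrite sabs_sqE; have := sqr_ge0 x; have := mulr_gt0 e_gt0 e_gt0; rewrite !expr2; lra.
Qed.

Lemma sabs_gt0 x : 0 < sabs x.
Proof. by rewrite /sabs /= sqrtr_gt0 sabs_sq_gt0. Qed.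

Lemma sqr_sabs x : sabs x ^+ 2 = x ^+ 2 + e ^+ 2.
Proof. by rewrite /sabs /= sqr_sqrtr ?sabs_sqE // ltW // -sabs_sqE sabs_sq_gt0. Qed.

Lemma sabsN x : sabs (- x) = sabs x.
Proof. by rewrite /sabs /= !sabs_sqE sqrrN. Qed.

Lemma sabs0 : sabs 0 = e.
Proof. by rewrite /sabs /= sabs_sqE expr0n /= add0r sqrtr_sqr gtr0_norm. Qed.

Lemma is_derive_sabs_sq (x : R) : is_derive x 1 sabs_sq (2 * x).
Proof. by rewrite /sabs_sq; apply: is_derive_eq; rewrite addr0 expr1 [_%:A]mulr1. Qed.

Local Instance is_derive_sabs (x : R) : is_derive x 1 sabs (x / sabs x).
Proof.
have := is_derive1_comp (is_derive1_sqrt (sabs_sq_gt0 x)) (is_derive_sabs_sq x).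
move=> h; apply: is_derive_eq h _; have := sabs_gt0 x.
by rewrite /sabs /= => h; field; lra.
Qed.

Local Instance is_derive_sabsV (x : R) :
  is_derive x 1 sabsV (- (sabs x) ^- 2 * (x / sabs x)).
Proof.
have := is_deriveV (lt0r_neq0 (sabs_gt0 x)) (is_derive_sabs x).
by move=> h; apply: is_derive_eq h _; rewrite [_ *: _]/=.
Qed.

Lemma is_derive_tent (x : R) : is_derive x 1 tent (tent1 x).
Proof.
rewrite /tent; apply: is_derive_eq.
rewrite /tent1 /tent_coef /tent_deg !fctE /=.
rewrite scaler0 addr0 sub0r [_%:A]mulr1 -[_ *: _]/(_ * _) /sabsV.
have hN : (n.*2.+2)%:R != 0 :> R by rewrite pnatr_eq0.
field; apply/and3P; split; try exact: lt0r_neq0 (sabs_gt0 _).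
by apply: lt0r_neq0; have := ler0n R n.*2; lra.
Qed.

Lemma is_derive_tent1 (x : R) : is_derive x 1 tent1 (tent2 x).
Proof.
rewrite /tent1; apply: is_derive_eq.
rewrite /tent2 /tent_coef !fctE /=.
rewrite scaler0 addr0 ![_%:A]mulr1 -![_ *: _]/(_ * _) /sabsV.
have -> : e ^+ 2 = sabs x ^+ 2 - x ^+ 2 by rewrite sqr_sabs; ring.
by field; rewrite !lt0r_neq0 ?sabs_gt0.
Qed.

Lemma derivable_tent2 (x : R) : derivable tent2 x 1.
Proof. by rewrite /tent2; exact: ex_derive. Qed.

Lemma tentE x : tent x = sabs 1 - tent_coef / tent_deg - sabs x
  + tent_coef / tent_deg * x ^+ (n.*2.+2).
Proof. by rewrite /tent !fctE. Qed.

Lemma tent1E x : tent1 x = - (x * sabsV x) + tent_coef * x ^+ (n.*2.+1).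
Proof. by rewrite /tent1 !fctE. Qed.

Lemma tent_H02 : H02 tent tent1 tent2.
Proof.
have m1e : (-1 : R) ^+ (n.*2.+2) = 1 by rewrite -signr_odd /= odd_double.
have m1o : (-1 : R) ^+ (n.*2.+1) = -1 by rewrite -signr_odd /= odd_double.
split.
  exact: continuous_L2 (continuous_subspaceT (derivable1_continuous derivable_tent2)).
split.
  apply: primitive_of_derive; [exact: is_derive_tent1|exact: derivable_tent2|].
  by rewrite tent1E m1o /tent_coef /sabsV sabsN; ring.
split.
  apply: primitive_of_derive; [exact: is_derive_tent|by move=> x; case: (is_derive_tent1 x)|].
  by rewrite tentE m1e sabsN; ring.
split; first by rewrite tentE expr1n; ring.
by rewrite tent1E expr1n /tent_coef; ring.
Qed.

Lemma tent_coef_bounds : 1 <= sabs 1 /\ 0 < tent_coef <= 1.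
Proof.
have A1 : 1 <= sabs 1.
  rewrite /sabs /= sabs_sqE -[X in X <= _]sqrtr1 ler_sqrt expr1n ?lerDl ?sqr_ge0 //.
  by apply: addr_ge0; [exact: ler01|exact: sqr_ge0].
have Ap := sabs_gt0 1.
split => //; rewrite /tent_coef /sabsV invr_gt0 Ap /= invr_le1 //.
by rewrite unitfE lt0r_neq0.
Qed.

Lemma tent0_ge : 1 - n.+1%:R^-1 - e <= tent 0.
Proof.
rewrite tentE expr0n /= mulr0 addr0 sabs0.
have [A1 /andP[k0 k1]] := tent_coef_bounds.
have Np : 0 < tent_deg by rewrite /tent_deg ltr0n.
have : tent_coef / tent_deg <= n.+1%:R^-1.
  apply: le_trans (_ : tent_deg^-1 <= _).
    by rewrite -[leRHS]mul1r ler_wpM2r // invr_ge0 ltW.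
  rewrite lef_pV2 ?posrE ?ltr0n // /tent_deg ler_nat ltnS -addnn.
  by apply: leqW; exact: leq_addr.
by move=> h; rewrite lerD2r; exact: lerB A1 h.
Qed.

(* Both terms of tent1 x have modulus at most 1 and opposite signs. *)
Lemma sqr_tent1_le1 x : -1 <= x <= 1 -> tent1 x ^+ 2 <= 1.
Proof.
move=> /andP[x1 x2]; rewrite tent1E.
set u := x * sabsV x; set v := tent_coef * x ^+ n.*2.+1.
have Ap := sabs_gt0 x; have A2 := sqr_sabs x.
have uA : u * sabs x = x by rewrite /u /sabsV -mulrA mulVf ?mulr1 // lt0r_neq0.
have u2 : u ^+ 2 <= 1.
  have : u ^+ 2 * sabs x ^+ 2 = x ^+ 2 by rewrite -exprMn uA.
  by have := mulr_gt0 e_gt0 e_gt0; rewrite !expr2 in A2 * => ? ?; nra.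
have [_ /andP[k0 k1]] := tent_coef_bounds.
have xx : 0 <= x ^+ 2 <= 1 by rewrite sqr_ge0 /=; nra.
have v2 : v ^+ 2 <= 1.
  have -> : v ^+ 2 = tent_coef ^+ 2 * (x ^+ 2) ^+ n.*2.+1.
    by rewrite /v -exprM mulnC exprM; ring.
  have : (x ^+ 2) ^+ n.*2.+1 <= 1 by case/andP: xx => ? ?; exact: exprn_ile1.
  have : 0 <= (x ^+ 2) ^+ n.*2.+1 by rewrite exprn_ge0 // sqr_ge0.
  nra.
have uv : 0 <= u * v.
  have -> : u * v = tent_coef * sabsV x * x ^+ n.*2.+2.
    by rewrite /u /v [x ^+ n.*2.+2]exprS; ring.
  apply: mulr_ge0; last by rewrite exprn_even_ge0 //= odd_double.
  by apply: mulr_ge0; [exact: ltW|rewrite /sabsV invr_ge0 ltW].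
have : (u ^+ 2 - u * v) * (v ^+ 2 - u * v) <= 0.
  have -> : (u ^+ 2 - u * v) * (v ^+ 2 - u * v) = - (u * v) * (u - v) ^+ 2.
    by ring.
  by rewrite mulNr oppr_le0; apply: mulr_ge0 => //; exact: sqr_ge0.
nra.
Qed.

Lemma sqint_tent1_le2 : sqint tent1 <= 2.
Proof.
have [_ I2] := primitive_L2 (proj1 (proj2 tent_H02)).
have -> : (2 : R) = Rintegral mu (@I11 R) (fun _ => 1).
  rewrite /I11 Rintegral_cst; last exact: measurable_itv.
  change (2 = 1 * fine (mu (`[-1, 1] : set mR))).
  by rewrite lebesgue_measure_itv /= lte_fin ifT /=; lra.
apply: le_Rintegral => //; first exact: measurable_itv.
  apply: continuous_compact_integrable; first exact: segment_compact.
  by apply: continuous_subspaceT => x; exact: cst_continuous.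
by move=> x; rewrite /I11 /= in_itv /=; exact: sqr_tent1_le1.
Qed.

End TentApprox.

(* p and S stand for psi(0) and |psi'|^2 of a smoothed tent function. *)
Lemma gap_margin {R : realFieldType} (G c : R) : 0 < G -> 0 <= c -> c < G / 2 ->
  exists2 d : R, 0 < d &
    forall p S : R, 1 - d <= p -> S <= 2 -> 0 < G * p ^+ 2 - c * S.
Proof.
move=> G0 c0 cG.
have [q qG q01] : exists2 q, q * G = c * 2 & 0 <= q < 1.
  exists (c * 2 / G); first by rewrite divfK // lt0r_neq0.
  by rewrite divr_ge0 ?mulr_ge0 ?(ltW G0) //= ltr_pdivrMr //; lra.
exists ((1 - q) / 4) => [|p S pd S2]; first lra.
have p2 : 1 - 2 * ((1 - q) / 4) <= p ^+ 2 by nra.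
by have := ler_wpM2l (ltW G0) p2; have := ler_wpM2l c0 S2; lra.
Qed.

Section CriticalValues.
Context {R : realType}.
Variables g rho : R.
Hypothesis grho : 0 < g * rho.

Definition Bc2_set : set R := [set r | exists psi psi1, H01 psi psi1 /\
  (exists x, -1 <= x <= 1 /\ psi x != 0) /\
  r = g * rho * psi 0 ^+ 2 / sqint psi1].

Definition xivc2_set (B : R) : set R := [set r | exists psi psi1 psi2,
  H02 psi psi1 psi2 /\ 0 < g * rho * psi 0 ^+ 2 - `|B| ^+ 2 * sqint psi1 /\
  r = `|B| ^+ 2 * sqint psi2 / (g * rho * psi 0 ^+ 2 - `|B| ^+ 2 * sqint psi1)].

Lemma Bc2_set_bound r : Bc2_set r -> 0 <= r <= g * rho / 2.
Proof.
move=> [psi [psi1 [H [_ ->]]]].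
have le2 := H01_sqr0_le H; have S0 := sqint_ge0 psi1.
have [->|Sn0] := eqVneq (sqint psi1) 0.
  by rewrite invr0 mulr0 lexx /= divr_ge0 // ltW.
have Sp : 0 < sqint psi1 by rewrite lt_neqAle eq_sym Sn0.
apply/andP; split; first by rewrite divr_ge0 // mulr_ge0 ?sqr_ge0 // ltW.
by rewrite ler_pdivrMr //; have := ler_wpM2l (ltW grho) le2; lra.
Qed.

Lemma Bc2_set_ubound : ubound Bc2_set (g * rho / 2).
Proof. by move=> r /Bc2_set_bound /andP[]. Qed.

Lemma Bc2_ub r : Bc2_set r -> r <= Bc2 g rho.
Proof.
move=> Er; apply: (@sup_upper_bound _ _ _ _ Er).
by split; [exists r|exists (g * rho / 2); exact: Bc2_set_ubound].
Qed.

Lemma Bc2_ge0 : 0 <= Bc2 g rho.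
Proof.
have [[r Er]|empty] := pselect (Bc2_set !=set0); last first.
  by rewrite /Bc2 sup_out //; case.
by have /andP[r0 _] := Bc2_set_bound Er; exact: le_trans r0 (Bc2_ub Er).
Qed.

Lemma Bc2_le : Bc2 g rho <= g * rho / 2.
Proof.
have [ne|empty] := pselect (Bc2_set !=set0).
  exact: ge_sup ne Bc2_set_ubound.
by rewrite /Bc2 sup_out //; [rewrite divr_ge0 // ltW|case].
Qed.

Lemma Bc2_ratio psi psi1 : H01 psi psi1 ->
  g * rho * psi 0 ^+ 2 <= Bc2 g rho * sqint psi1.
Proof.
move=> H; have [->|p0] := eqVneq (psi 0) 0.
  by rewrite expr0n /= mulr0 mulr_ge0 ?Bc2_ge0 ?sqint_ge0.
have Sp : 0 < sqint psi1.
  by apply: lt_le_trans (H01_sqr0_le H); rewrite mulr_gt0 // exprn_even_gt0.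
have Er : Bc2_set (g * rho * psi 0 ^+ 2 / sqint psi1).
  by exists psi, psi1; split => //; split => //; exists 0; split => //; lra.
by rewrite -ler_pdivrMr //; exact: Bc2_ub.
Qed.

Lemma lt_Bc2 (b : R) psi psi1 : 0 <= b -> H01 psi psi1 ->
  b * sqint psi1 < g * rho * psi 0 ^+ 2 -> b < Bc2 g rho /\ psi 0 != 0.
Proof.
move=> b0 H lt; have := Bc2_ratio H; have S0 := sqint_ge0 psi1.
move=> le; split; first by nra.
apply/eqP => p0; move: lt; rewrite p0 expr0n /= mulr0 ltNge.
by rewrite mulr_ge0.
Qed.

Lemma xivc2_set_ge0 B r : xivc2_set B r -> 0 <= r.
Proof.
move=> [psi [psi1 [psi2 [_ [D0 ->]]]]].
by rewrite divr_ge0 ?mulr_ge0 ?sqr_ge0 ?sqint_ge0 // ltW.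
Qed.

Lemma xivc2_ge0 B : 0 <= xivc2 g rho B.
Proof.
have [[r Er]|empty] := pselect (xivc2_set B !=set0); last first.
  by rewrite /xivc2 inf_out //; case.
by apply: lb_le_inf; [exists r|exact: xivc2_set_ge0].
Qed.

Lemma xivc2_lb B r : xivc2_set B r -> xivc2 g rho B <= r.
Proof. by move=> Er; apply: ge_inf Er; exists 0 => y /xivc2_set_ge0. Qed.

Lemma xivc2_set_neq0 B : `|B| ^+ 2 < g * rho / 2 -> xivc2_set B !=set0.
Proof.
move=> hB; have [d d0 margin] := gap_margin grho (sqr_ge0 `|B|) hB.
have [n hn] := ltr_add_invr (y := 0) (x := d / 2) ltac:(lra).
have e0 : 0 < d / 2 by lra.
have p0 := tent0_ge n e0.
eexists; exists (tent (d / 2) n), (tent1 (d / 2) n), (tent2 (d / 2) n).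
split; [exact: tent_H02|split => //].
apply: margin (sqint_tent1_le2 n e0); rewrite add0r in hn.
by move: hn p0; generalize (n.+1%:R^-1 : R) => a; lra.
Qed.

Lemma E0_lt0P B xi psi psi1 psi2 : B != 0 -> xi != 0 -> H02 psi psi1 psi2 ->
  E0 g rho B xi psi psi1 psi2 < 0 <->
  0 < g * rho * psi 0 ^+ 2 - `|B| ^+ 2 * sqint psi1 /\
  `|B| ^+ 2 * sqint psi2 / (g * rho * psi 0 ^+ 2 - `|B| ^+ 2 * sqint psi1)
    < xi ^+ 2.
Proof.
move=> B0 xi0 H; rewrite E0E //.
set D := g * rho * psi 0 ^+ 2 - `|B| ^+ 2 * sqint psi1.
set b := `|B| ^+ 2; set t := xi ^+ 2; set S := sqint psi2.
have b0 : 0 < b by rewrite exprn_even_gt0 //= normr_eq0.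
have t0 : 0 < t by rewrite exprn_even_gt0.
have S0 : 0 <= S := sqint_ge0 psi2.
have bt : b / t * S * t = b * S by field; exact: lt0r_neq0.
have bS : 0 <= b * S by exact: mulr_ge0 (ltW b0) S0.
split=> [lt0|[Dp]].
  have Dp : 0 < D by nra.
  by split => //; rewrite ltr_pdivrMr //; nra.
by rewrite ltr_pdivrMr //; nra.
Qed.

Lemma E0_ge_supercritical B xi psi psi1 psi2 : H02 psi psi1 psi2 ->
  Bc2 g rho <= `|B| ^+ 2 ->
  2^-1 * Rintegral (@lebesgue_measure R) (@I11 R)
    (fun x => (`|B| ^+ 2 - Bc2 g rho) * psi1 x ^+ 2
              + `|B| ^+ 2 * psi2 x ^+ 2 / xi ^+ 2)
  <= E0 g rho B xi psi psi1 psi2.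
Proof.
move=> H hB; rewrite E0E //.
have -> : Rintegral (@lebesgue_measure R) (@I11 R)
    (fun x => (`|B| ^+ 2 - Bc2 g rho) * psi1 x ^+ 2
              + `|B| ^+ 2 * psi2 x ^+ 2 / xi ^+ 2) =
  (`|B| ^+ 2 - Bc2 g rho) * sqint psi1 + `|B| ^+ 2 / xi ^+ 2 * sqint psi2.
  by rewrite -(sqint_lincomb _ _ H); apply: eq_Rintegral => x _; ring.
by have := Bc2_ratio (H02_H01 H); lra.
Qed.

Lemma E0_ge0_subcritical B xi psi psi1 psi2 : B != 0 -> xi != 0 ->
  H02 psi psi1 psi2 -> xi ^+ 2 <= xivc2 g rho B ->
  0 <= E0 g rho B xi psi psi1 psi2.
Proof.
move=> B0 xi0 H hxi; rewrite leNgt; apply/negP => /(E0_lt0P B0 xi0 H) [Dp lt].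
have : xivc2 g rho B <= _ := xivc2_lb (ex_intro _ psi (ex_intro _ psi1
  (ex_intro _ psi2 (conj H (conj Dp erefl))))).
lra.
Qed.

Lemma E0_lt0_exists B xi : B != 0 -> xi != 0 -> `|B| ^+ 2 < Bc2 g rho ->
  xivc2 g rho B < xi ^+ 2 ->
  exists psi psi1 psi2, H02 psi psi1 psi2 /\ E0 g rho B xi psi psi1 psi2 < 0.
Proof.
move=> B0 xi0 hB hxi.
have ne : xivc2_set B !=set0 by apply: xivc2_set_neq0; have := Bc2_le; lra.
have [_ [psi [psi1 [psi2 [H [Dp ->]]]]] lt] := inf_lt ne hxi.
by exists psi, psi1, psi2; split => //; apply/(E0_lt0P B0 xi0 H).
Qed.

Lemma E0_lt0_necessary B xi psi psi1 psi2 : B != 0 -> xi != 0 ->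
  H02 psi psi1 psi2 -> E0 g rho B xi psi psi1 psi2 < 0 ->
  [/\ `|B| ^+ 2 < Bc2 g rho, xivc2 g rho B < xi ^+ 2 & psi 0 != 0].
Proof.
move=> B0 xi0 H /(E0_lt0P B0 xi0 H) [Dp lt].
have [hB p0] := lt_Bc2 (sqr_ge0 `|B|) (H02_H01 H) ltac:(lra).
split => //; apply: le_lt_trans lt; apply: xivc2_lb.
by exists psi, psi1, psi2.
Qed.

End CriticalValues.

Theorem lemma3p3 (R : realType) (g rho B xi : R) :
  0 < g -> 0 < rho -> B != 0 -> xi != 0 ->
  (* (i) *)
  (Bc g rho <= `|B| ->
     forall psi psi1 psi2 : R -> R, H02 psi psi1 psi2 ->
       0 <= E0 g rho B xi psi psi1 psi2 /\
       2^-1 * Rintegral (@lebesgue_measure R) (@I11 R)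
         (fun x => (`|B| ^+ 2 - Bc2 g rho) * psi1 x ^+ 2
                   + `|B| ^+ 2 * psi2 x ^+ 2 / xi ^+ 2)
       <= E0 g rho B xi psi psi1 psi2) /\
  (* (ii) *)
  (`|B| < Bc g rho -> `|xi| <= xivc g rho B ->
     forall psi psi1 psi2 : R -> R, H02 psi psi1 psi2 ->
       0 <= E0 g rho B xi psi psi1 psi2) /\
  (* (iii) *)
  (`|B| < Bc g rho -> xivc g rho B < `|xi| ->
     exists psi psi1 psi2 : R -> R, H02 psi psi1 psi2 /\
       E0 g rho B xi psi psi1 psi2 < 0) /\
  (* (iv) *)
  (forall psi psi1 psi2 : R -> R, H02 psi psi1 psi2 ->
     E0 g rho B xi psi psi1 psi2 < 0 ->
     [/\ `|B| < Bc g rho, xivc g rho B < `|xi| & psi 0 != 0]).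
Proof.
move=> g0 rho0 B0 xi0; have grho := mulr_gt0 g0 rho0.
have BcE : (Bc g rho <= `|B|) = (Bc2 g rho <= `|B| ^+ 2) := sqrtr_le_norm _ _.
have BcE' : (`|B| < Bc g rho) = (`|B| ^+ 2 < Bc2 g rho).
  by rewrite ltNge BcE -ltNge.
have xiE : (`|xi| <= xivc g rho B) = (xi ^+ 2 <= xivc2 g rho B).
  by rewrite norm_le_sqrtr ?xivc2_ge0 // real_normK ?num_real.
have xiE' : (xivc g rho B < `|xi|) = (xivc2 g rho B < xi ^+ 2).
  by rewrite ltNge xiE -ltNge.
rewrite BcE BcE' xiE xiE'; split; [|split; [|split]].
- move=> hB psi psi1 psi2 H; have le := E0_ge_supercritical grho xi H hB.
  split => //; apply: le_trans le; rewrite mulr_ge0 ?invr_ge0 //.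
  apply: Rintegral_ge0 => x _; apply: addr_ge0.
    by apply: mulr_ge0; [rewrite subr_ge0|exact: sqr_ge0].
  by apply: divr_ge0; [exact: mulr_ge0 (sqr_ge0 _) (sqr_ge0 _)|exact: sqr_ge0].
- by move=> _ hxi psi psi1 psi2 H; exact: E0_ge0_subcritical.
- by move=> hB hxi; exact: E0_lt0_exists.
- by move=> psi psi1 psi2 H; exact: E0_lt0_necessary.
Qed.
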